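(* For every CABA framework $F_c$, $\mathit{GrCInst}(\mathit{CArg})=\mathit{GrCInst}(\mathit{MGCArg})$.
   Context: Conventions. $\mathsf X$ denotes a tuple of variables and $\mathsf t$ a tuple of terms. A substitution $\vartheta=\{X_1/t_1,\dots,X_n/t_n\}$ maps distinct variables to terms; $e\vartheta$ replaces each occurrence of $X_i$ in $e$ by $t_i$; $\{\mathsf X/\mathsf t\}$ maps $\mathsf X$ componentwise to $\mathsf t$. An object is ground if it has no variables. Theory of constraints. $\mathcal{CT}$ is a first-order theory with equality whose atomic formulas form the set $\mathcal C$ of constraints; a finite set $\{c_1,\dots,c_n\}\subseteq\mathcal C$ is consistent if $\mathcal{CT}\models\exists(c_1\wedge\dots\wedge c_n)$. CABA framework $F_c=\langle\mathcal L_c,\mathcal C,\mathcal R,\mathcal{CT},\mathcal A,\overline{\cdot}\rangle$: $\mathcal L_c$ a set of atoms; $\mathcal C\subseteq\mathcal L_c$ the constraints of $\mathcal{CT}$; $\mathcal R$ a set of rules $s_0\leftarrow s_1,\dots,s_m$ ($s_0\in\mathcal L_c\setminus\mathcal C$, $s_i\in\mathcal L_c$), in normalised form $p(\mathsf X_0)\leftarrow C,p_1(\mathsf X_1),\dots,p_m(\mathsf X_m)$ with $C\subseteq\mathcal C$ and each $\mathsf X_i$ a tuple of distinct variables; $\mathcal A\subseteq\mathcal L_c\setminus\mathcal C$ a nonempty set of assumptions that are not heads of rules; $\overline\cdot:\mathcal A\to\mathcal L_c\setminus\mathcal C$ a total contrary map with $\overline{p(\mathsf t)}=cp(\mathsf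 t)$ for a fixed predicate $cp$ per assumption predicate $p$; $\mathcal L_c,\mathcal C,\mathcal A$ predicate closed. Tight constrained argument $C\cup A\vdash_R s$ (consistent $C\subseteq\mathcal C$, $A\subseteq\mathcal A$, $R\subseteq\mathcal R$, $s\in\mathcal L_c\setminus\mathcal C$): a finite tree with root $s$ in which every non-leaf node $p(\mathsf t)$ has as children exactly $s_1\vartheta,\dots,s_m\vartheta$ for exactly one renamed-apart copy $p(\mathsf X)\leftarrow s_1,\dots,s_m$ of a rule in $R$, $\vartheta=\{\mathsf X/\mathsf t\}$ (or the single child true for a fact), every leaf being a constraint in $C$, an assumption in $A$ or true; $C,A,R$ are exactly the constraints, assumptions and rules of the tree. Most general: tight with claim of the form $p(\mathsf X)$. A constrained argument is $C'\cup A'\vdash_R s'$ such that there are a tight constrained argument $C\cup A\vdash_R s$, a substitution $\vartheta$ and $D\subseteq\mathcal C$ with $C'=C\vartheta\cup D$, $A'=A\vartheta$, $s'=s\vartheta$ and $C'$ consistent. $\alpha'=C'\cup A'\vdash_R s'$ is a constrained instance (via $\vartheta$, $D$) of a constrained argument $\alpha=C\cup A\vdash_R s$ if $C'=C\vartheta\cup D$, $A'=A\vartheta$, $s'=s\vartheta$ and $C'$ is consistent. $\mathit{MGCArg}$, $\mathit{CArg}$: sets of most general and of all constrained arguments of $F_c$. $\mathit{GrCInst}(\alpha)$ is the set of ground constrained instances of $\alpha$, and $\mathit{GrCInst}(\Gamma)=\bigcup_{\alpha\in\Gamma}\mathit{GrCInst}(\alpha)$. *)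

From Stdlib Require Import List.
Import ListNotations.




Section CABA.

(* F : function symbols, P : predicate symbols.  Variables are natural numbers
   (a countably infinite supply, as needed for renaming apart). *)
Context {F P : Type}.

Inductive term : Type :=
| Var (x : nat)
| Fn (f : F) (ts : list term).

Record atom : Type := Atom { pred_of : P; args_of : list term }.

(* substitutions are total maps from variables to terms; applying one to a
   finite object only depends on finitely many of its values *)
Definition subst := nat -> term.

Fixpoint tsubst (th : subst) (t : term) : term :=
  match t with
  | Var x => th x
  | Fn f ts => Fn f (map (tsubst th) ts)
  end.

Definition asubst (th : subst) (a : atom) : atom :=
  Atom (pred_of a) (map (tsubst th) (args_of a)).

Fixpoint tvars (t : term) : list nat :=
  match t with
  | Var x => [x]
  | Fn _ ts => flat_map tvars ts
  end.

Definition avars (a : atom) : list nat := flat_map tvars (args_of a).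

Definition aground (a : atom) : Prop := avars a = [].

Fixpoint mk_subst (xs : list nat) (ts : list term) : subst :=
  match xs, ts with
  | x :: xs', t :: ts' => fun y => if Nat.eqb y x then t else mk_subst xs' ts' y
  | _, _ => Var
  end.

Record rule : Type := Rule { rhead : P; rvars : list nat; rbody : list atom }.

Definition rhead_atom (r : rule) : atom := Atom (rhead r) (map Var (rvars r)).

Definition rule_vars (r : rule) : list nat := rvars r ++ flat_map avars (rbody r).

Definition rename_rule (rho : nat -> nat) (r : rule) : rule :=
  Rule (rhead r) (map rho (rvars r)) (map (asubst (fun x => Var (rho x))) (rbody r)).

Definition injective_nat (rho : nat -> nat) : Prop :=
  forall x y, rho x = rho y -> x = y.

Inductive formula : Type :=
| FAtom (a : atom)
| FFalse
| FImp (phi psi : formula)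
| FAll (x : nat) (phi : formula).

Fixpoint fpreds_in (Q : P -> Prop) (phi : formula) : Prop :=
  match phi with
  | FAtom a => Q (pred_of a)
  | FFalse => True
  | FImp phi psi => fpreds_in Q phi /\ fpreds_in Q psi
  | FAll _ phi => fpreds_in Q phi
  end.

Record structure : Type := Structure {
  dom : Type;
  dom_inh : dom;
  ifun : F -> list dom -> dom;
  ipred : P -> list dom -> Prop }.

Fixpoint teval (M : structure) (v : nat -> dom M) (t : term) : dom M :=
  match t with
  | Var x => v x
  | Fn f ts => @ifun M f (map (teval M v) ts)
  end.

Definition aholds (M : structure) (v : nat -> dom M) (a : atom) : Prop :=
  @ipred M (pred_of a) (map (teval M v) (args_of a)).

Definition upd (M : structure) (v : nat -> dom M) (x : nat) (d : dom M) : nat -> dom M :=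
  fun y => if Nat.eqb y x then d else v y.

Fixpoint sat (M : structure) (v : nat -> dom M) (phi : formula) : Prop :=
  match phi with
  | FAtom a => aholds M v a
  | FFalse => False
  | FImp phi psi => sat M v phi -> sat M v psi
  | FAll x phi => forall d : dom M, sat M (upd M v x d) phi
  end.

Definition normalised (is_cpred : P -> Prop) (r : rule) : Prop :=
  ~ is_cpred (rhead r) /\ NoDup (rvars r) /\
  forall b, In b (rbody r) ->
    is_cpred (pred_of b) \/
    (~ is_cpred (pred_of b) /\
     exists xs, NoDup xs /\ args_of b = map Var xs).

Record caba : Type := CABA {
  (* constraints C = atoms whose predicate is a constraint predicate *)
  is_cpred : P -> Prop;
  ceq : P;
  ceq_cpred : is_cpred ceq;
  CT : formula -> Prop;
  CT_lang : forall phi, CT phi -> fpreds_in is_cpred phi;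
  is_rule : rule -> Prop;
  rules_normalised : forall r, is_rule r -> normalised is_cpred r;
  (* assumptions A = atoms whose predicate is an assumption predicate *)
  is_apred : P -> Prop;
  apred_not_cpred : forall p, is_apred p -> ~ is_cpred p;
  apred_nonempty : exists p, is_apred p;
  apred_not_head : forall r, is_rule r -> ~ is_apred (rhead r);
  (* contrary: contrary of p(t) is cp(t) *)
  contrary_pred : P -> P;
  contrary_not_cpred : forall p, is_apred p -> ~ is_cpred (contrary_pred p) }.

Section Framework.
Variable fw : caba.

Definition is_constraint (a : atom) : Prop := is_cpred fw (pred_of a).
Definition is_assumption (a : atom) : Prop := is_apred fw (pred_of a).

Definition model (M : structure) : Prop :=
  (forall l, @ipred M (ceq fw) l <-> exists d, l = [d; d]) /\
  (forall phi, CT fw phi -> forall v, sat M v phi).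

Definition consistent (C : list atom) : Prop :=
  (forall c, In c C -> is_constraint c) /\
  forall M, model M -> exists v : nat -> dom M, forall c, In c C -> aholds M v c.

(** argument trees: leaves are [TTrue] or atoms; an inner node records its
    label, the rule r of R used and the renamed-apart copy c of r *)
Inductive tree : Type :=
| TTrue
| TLeaf (a : atom)
| TNode (a : atom) (r c : rule) (ch : list tree).

Definition label (T : tree) : option atom :=
  match T with
  | TTrue => None
  | TLeaf a => Some a
  | TNode a _ _ _ => Some a
  end.

Fixpoint tvalid (T : tree) : Prop :=
  match T with
  | TTrue => True
  | TLeaf a => is_constraint a \/ is_assumption a
  | TNode a r c ch =>
      is_rule fw r /\
      (exists rho, injective_nat rho /\ c = rename_rule rho r) /\
      pred_of a = rhead c /\
      length (args_of a) = length (rvars c) /\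
      (let th := mk_subst (rvars c) (args_of a) in
       match rbody c with
       | [] => ch = [TTrue]
       | body => map label ch = map (fun b => Some (asubst th b)) body
       end) /\
      (fix allv (l : list tree) : Prop :=
         match l with [] => True | T' :: l' => tvalid T' /\ allv l' end) ch
  end.

Fixpoint tleaves (T : tree) : list atom :=
  match T with
  | TTrue => []
  | TLeaf a => [a]
  | TNode _ _ _ ch => flat_map tleaves ch
  end.

Fixpoint trules (T : tree) : list rule :=
  match T with
  | TTrue => []
  | TLeaf _ => []
  | TNode _ r _ ch => r :: flat_map trules ch
  end.

Fixpoint tcopies (T : tree) : list rule :=
  match T with
  | TTrue => []
  | TLeaf _ => []
  | TNode _ _ c ch => c :: flat_map tcopies ch
  end.

Definition disjoint (l1 l2 : list nat) : Prop := forall x, In x l1 -> ~ In x l2.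

Definition renamed_apart (T : tree) (s : atom) : Prop :=
  let cs := tcopies T in
  (forall i j, i <> j -> i < length cs -> j < length cs ->
     disjoint (rule_vars (nth i cs (Rule (ceq fw) [] [])))
              (rule_vars (nth j cs (Rule (ceq fw) [] [])))) /\
  (forall c, In c cs -> disjoint (rule_vars c) (avars s)).

Record carg : Type := CArg { aC : list atom; aA : list atom; aR : list rule; claim : atom }.

Definition seteq {T : Type} (l1 l2 : list T) : Prop := forall x, In x l1 <-> In x l2.

Definition tight (al : carg) : Prop :=
  ~ is_constraint (claim al) /\
  consistent (aC al) /\
  exists T : tree,
    tvalid T /\ label T = Some (claim al) /\ renamed_apart T (claim al) /\
    (forall x, In x (aC al) <-> In x (tleaves T) /\ is_constraint x) /\
    (forall x, In x (aA al) <-> In x (tleaves T) /\ is_assumption x) /\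
    seteq (aR al) (trules T).

Definition most_general (al : carg) : Prop :=
  tight al /\ exists xs, NoDup xs /\ args_of (claim al) = map Var xs.

Definition cinst_via (al' al : carg) (th : subst) (D : list atom) : Prop :=
  (forall d, In d D -> is_constraint d) /\
  seteq (aC al') (map (asubst th) (aC al) ++ D) /\
  seteq (aA al') (map (asubst th) (aA al)) /\
  seteq (aR al') (aR al) /\
  claim al' = asubst th (claim al) /\
  consistent (aC al').

Definition cinst (al' al : carg) : Prop := exists th D, cinst_via al' al th D.

Definition is_carg (al' : carg) : Prop := exists al, tight al /\ cinst al' al.
Definition is_mgcarg (al : carg) : Prop := most_general al.

Definition ground_carg (al : carg) : Prop :=
  (forall a, In a (aC al) -> aground a) /\
  (forall a, In a (aA al) -> aground a) /\
  aground (claim al).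

Definition GrCInst (al : carg) (al' : carg) : Prop := cinst al' al /\ ground_carg al'.
Definition GrCInstS (Gamma : carg -> Prop) (al' : carg) : Prop :=
  exists al, Gamma al /\ GrCInst al al'.

End Framework.
End CABA.

(** A tight argument for a claim p(t) is generalised by relabelling its tree:
    the root becomes p(Y) for fresh distinct variables Y, and every label below
    is recomputed from the same rule copies.  Since the copies are renamed apart
    from Y, the substitution {Y/t} maps the new tree back onto the old one, so the
    old argument is a constrained instance (with no extra constraints) of a most
    general one.  Constrained instantiation is transitive, so ground instances of
    constrained arguments are ground instances of most general ones; conversely,
    a most general argument is tight and hence a constrained instance of itself. *)

From Stdlib Require Import List Lia Classical PeanoNat.
Import ListNotations.

Section Substitution.
Context {F P : Type}.

Fixpoint term_nested_ind (Q : @term F -> Prop) (HV : forall x, Q (Var x))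
  (HF : forall f ts, Forall Q ts -> Q (Fn f ts)) (t : term) : Q t :=
  match t with
  | Var x => HV x
  | Fn f ts => HF f ts ((fix all_ts (l : list term) : Forall Q l :=
       match l with
       | [] => Forall_nil _
       | u :: l' => Forall_cons _ (term_nested_ind Q HV HF u) (all_ts l')
       end) ts)
  end.

Lemma tsubst_ext_in (th1 th2 : subst) (t : @term F) :
  (forall x, In x (tvars t) -> th1 x = th2 x) -> tsubst th1 t = tsubst th2 t.
Proof.
  induction t as [x | f ts IH] using term_nested_ind; simpl; intros Hth.
  - apply Hth; simpl; auto.
  - f_equal. apply map_ext_in. intros u Hu.
    rewrite Forall_forall in IH. apply IH; auto.
    intros x Hx. apply Hth, in_flat_map. eauto.
Qed.

Lemma tsubst_Var (t : @term F) : tsubst Var t = t.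
Proof.
  induction t as [x | f ts IH] using term_nested_ind; simpl; auto.
  f_equal. rewrite <- (map_id ts) at 2. apply map_ext_in.
  intros u Hu. rewrite Forall_forall in IH. auto.
Qed.

Lemma tsubst_tsubst (th1 th2 : subst) (t : @term F) :
  tsubst th1 (tsubst th2 t) = tsubst (fun x => tsubst th1 (th2 x)) t.
Proof.
  induction t as [x | f ts IH] using term_nested_ind; simpl; auto.
  f_equal. rewrite map_map. apply map_ext_in.
  intros u Hu. rewrite Forall_forall in IH. auto.
Qed.

Lemma teval_tsubst (M : @structure F P) v th (t : @term F) :
  teval M v (tsubst th t) = teval M (fun x => teval M v (th x)) t.
Proof.
  induction t as [x | f ts IH] using term_nested_ind; simpl; auto.
  f_equal. rewrite map_map. apply map_ext_in.
  intros u Hu. rewrite Forall_forall in IH. auto.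
Qed.

Lemma asubst_ext_in (th1 th2 : subst) (a : @atom F P) :
  (forall x, In x (avars a) -> th1 x = th2 x) -> asubst th1 a = asubst th2 a.
Proof.
  intros Hth. unfold asubst. f_equal. apply map_ext_in. intros t Ht.
  apply tsubst_ext_in. intros x Hx. apply Hth, in_flat_map. eauto.
Qed.

Lemma asubst_Var (a : @atom F P) : asubst Var a = a.
Proof.
  destruct a as [p ts]. unfold asubst; simpl.
  f_equal. rewrite <- (map_id ts) at 2. apply map_ext, tsubst_Var.
Qed.

Lemma map_asubst_Var (l : list (@atom F P)) : map (asubst Var) l = l.
Proof. rewrite <- (map_id l) at 2. apply map_ext, asubst_Var. Qed.

Lemma asubst_asubst (th1 th2 : subst) (a : @atom F P) :
  asubst th1 (asubst th2 a) = asubst (fun x => tsubst th1 (th2 x)) a.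
Proof.
  unfold asubst; simpl. f_equal. rewrite map_map. apply map_ext, tsubst_tsubst.
Qed.

Lemma aholds_asubst (M : @structure F P) v th (a : @atom F P) :
  aholds M v (asubst th a) <-> aholds M (fun x => teval M v (th x)) a.
Proof.
  unfold aholds, asubst; simpl. rewrite map_map.
  erewrite map_ext; [reflexivity | apply teval_tsubst].
Qed.

Lemma avars_Var_atom (p : P) (xs : list nat) : avars (@Atom F P p (map Var xs)) = xs.
Proof.
  unfold avars; simpl. induction xs as [|x xs IH]; simpl; congruence.
Qed.

Lemma mk_subst_notin xs (ts : list (@term F)) x : ~ In x xs -> mk_subst xs ts x = Var x.
Proof.
  revert ts; induction xs as [|y xs IH]; intros [|t ts] Hx; simpl; auto.
  destruct (Nat.eqb_spec x y) as [-> | _].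
  - exfalso. apply Hx; simpl; auto.
  - apply IH. intro; apply Hx; simpl; auto.
Qed.

Lemma map_mk_subst xs (ts : list (@term F)) :
  NoDup xs -> length xs = length ts -> map (mk_subst xs ts) xs = ts.
Proof.
  revert ts; induction xs as [|x xs IH]; intros [|t ts] Hnd Hlen;
    simpl in *; try discriminate; auto.
  rewrite Nat.eqb_refl. f_equal. inversion Hnd as [|? ? Hx Hnd']; subst.
  transitivity (map (mk_subst xs ts) xs); [|apply IH; auto].
  apply map_ext_in. intros y Hy.
  destruct (Nat.eqb_spec y x) as [-> | _]; [contradiction | reflexivity].
Qed.

Lemma tsubst_mk_subst (sg : subst) xs (ts : list (@term F)) x :
  sg x = Var x -> tsubst sg (mk_subst xs ts x) = mk_subst xs (map (tsubst sg) ts) x.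
Proof.
  revert ts; induction xs as [|y xs IH]; intros [|t ts] Hx; simpl; auto.
  destruct (Nat.eqb x y); auto.
Qed.

Lemma asubst_asubst_mk_subst (sg : subst) xs (ts : list (@term F)) (b : @atom F P) :
  (forall x, In x (avars b) -> sg x = Var x) ->
  asubst sg (asubst (mk_subst xs ts) b) = asubst (mk_subst xs (map (tsubst sg) ts)) b.
Proof.
  intros Hsg. rewrite asubst_asubst. apply asubst_ext_in.
  intros x Hx. apply tsubst_mk_subst, Hsg, Hx.
Qed.

End Substitution.

Fixpoint map_along {A B : Type} (f : A -> B -> A) (l : list A) (bs : list B) : list A :=
  match l, bs with
  | u :: l', b :: bs' => f u b :: map_along f l' bs'
  | _, _ => l  (* keeps the [TTrue] child of a node built from a fact *)
  end.

Section Relabel.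
Context {F P : Type} (fw : @caba F P).

Fixpoint tree_nested_ind (Q : @tree F P -> Prop) (HT : Q TTrue) (HL : forall a, Q (TLeaf a))
  (HN : forall a r c ch, Forall Q ch -> Q (TNode a r c ch)) (T : tree) : Q T :=
  match T with
  | TTrue => HT
  | TLeaf a => HL a
  | TNode a r c ch => HN a r c ch ((fix all_ch (l : list tree) : Forall Q l :=
       match l with
       | [] => Forall_nil _
       | T' :: l' => Forall_cons _ (tree_nested_ind Q HT HL HN T') (all_ch l')
       end) ch)
  end.

Lemma tvalid_TNode a r c ch :
  tvalid fw (TNode a r c ch) <->
  is_rule fw r /\
  (exists rho, injective_nat rho /\ c = rename_rule rho r) /\
  pred_of a = rhead c /\
  length (args_of a) = length (rvars c) /\
  match rbody c with
  | [] => ch = [TTrue]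
  | body => map label ch = map (fun b => Some (asubst (mk_subst (rvars c) (args_of a)) b)) body
  end /\
  Forall (tvalid fw) ch.
Proof.
  assert (Hall : forall l : list tree,
    (fix allv (l : list tree) : Prop :=
       match l with [] => True | T' :: l' => tvalid fw T' /\ allv l' end) l
    <-> Forall (tvalid fw) l).
  { induction l; simpl; rewrite ?Forall_cons_iff; [split; auto | tauto]. }
  simpl. rewrite Hall. reflexivity.
Qed.

(* The labels of a valid tree are determined by its root label and its rule copies. *)
Fixpoint relabel (a' : @atom F P) (T : tree) : tree :=
  match T with
  | TTrue => TTrue
  | TLeaf _ => TLeaf a'
  | TNode _ r c ch =>
      TNode a' r c (map_along (fun T1 b => relabel (asubst (mk_subst (rvars c) (args_of a')) b) T1)
                      ch (rbody c))
  end.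

Variable sg : @subst F.

Definition relabel_sound (T : tree) : Prop :=
  forall a' a, tvalid fw T -> label T = Some a -> asubst sg a' = a ->
  (forall c, In c (tcopies T) -> forall x, In x (rule_vars c) -> sg x = Var x) ->
  tvalid fw (relabel a' T) /\ label (relabel a' T) = Some a' /\
  tcopies (relabel a' T) = tcopies T /\ trules (relabel a' T) = trules T /\
  map (asubst sg) (tleaves (relabel a' T)) = tleaves T.

Lemma relabel_children_sound th th' (ch : list tree) (bs : list atom) :
  Forall relabel_sound ch ->
  (forall b, In b bs -> asubst sg (asubst th' b) = asubst th b) ->
  map label ch = map (fun b => Some (asubst th b)) bs -> Forall (tvalid fw) ch ->
  (forall c, In c (flat_map tcopies ch) -> forall x, In x (rule_vars c) -> sg x = Var x) ->
  let ch' := map_along (fun T1 b => relabel (asubst th' b) T1) ch bs in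
  map label ch' = map (fun b => Some (asubst th' b)) bs /\ Forall (tvalid fw) ch' /\
  flat_map tcopies ch' = flat_map tcopies ch /\ flat_map trules ch' = flat_map trules ch /\
  map (asubst sg) (flat_map tleaves ch') = flat_map tleaves ch.
Proof.
  revert bs; induction ch as [|T1 ch IH]; intros [|b bs] Hsound Hbs Hlabels Hvalid Hsg;
    simpl in *; try discriminate.
  - repeat split; auto.
  - injection Hlabels as Hlabel Hlabels.
    apply Forall_cons_iff in Hsound as [Hsound1 Hsound].
    apply Forall_cons_iff in Hvalid as [Hvalid1 Hvalid].
    destruct (Hsound1 (asubst th' b) (asubst th b)) as (V1 & L1 & C1 & R1 & E1); auto.
    { intros c Hc. apply Hsg, in_or_app; auto. }
    destruct (IH bs) as (L & V & C & R & E); auto.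
    { intros c Hc. apply Hsg, in_or_app; auto. }
    rewrite L1, L, C1, C, R1, R, map_app, E1, E. repeat split; auto.
Qed.

Lemma relabel_sound_all (T : tree) : relabel_sound T.
Proof.
  induction T as [| a0 | a0 r c ch IH] using tree_nested_ind;
    intros a' a Hvalid Hlabel Ha' Hsg; simpl in Hlabel; try discriminate;
    injection Hlabel as <-.
  - subst a0. repeat split; simpl; auto.
  - apply tvalid_TNode in Hvalid as (Hr & Hc & Hpred & Hlen & Hlabels & Hvalid).
    assert (Hargs : args_of a0 = map (tsubst sg) (args_of a')) by (subst a0; reflexivity).
    assert (Hhead : pred_of a' = rhead c /\ length (args_of a') = length (rvars c)).
    { subst a0. simpl in Hpred, Hlen. rewrite length_map in Hlen. auto. }
    assert (Hbody : forall b, In b (rbody c) ->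
      asubst sg (asubst (mk_subst (rvars c) (args_of a')) b)
      = asubst (mk_subst (rvars c) (args_of a0)) b).
    { intros b Hb. rewrite Hargs. apply asubst_asubst_mk_subst.
      intros x Hx. apply (Hsg c); [simpl; auto|].
      apply in_or_app. right. apply in_flat_map. eauto. }
    cbn [relabel]. destruct (rbody c) as [|b bs] eqn:Hbs.
    + subst ch. split; [|simpl; auto].
      apply tvalid_TNode. rewrite Hbs. repeat split; tauto.
    + destruct (relabel_children_sound (mk_subst (rvars c) (args_of a0))
        (mk_subst (rvars c) (args_of a')) ch (b :: bs)) as (L & V & C & R & E); auto.
      { intros c' Hc'. apply (Hsg c'); simpl; auto. }
      split; [|simpl; rewrite C, R, E; auto].
      apply tvalid_TNode. rewrite Hbs. repeat split; tauto.
Qed.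

End Relabel.

Section SetEq.
Context {A B : Type}.

Lemma seteq_refl (l : list A) : seteq l l.
Proof. intro; reflexivity. Qed.

Lemma seteq_trans (l1 l2 l3 : list A) : seteq l1 l2 -> seteq l2 l3 -> seteq l1 l3.
Proof. intros H12 H23 x. rewrite (H12 x). apply H23. Qed.

Lemma seteq_app (l1 l1' l2 l2' : list A) :
  seteq l1 l1' -> seteq l2 l2' -> seteq (l1 ++ l2) (l1' ++ l2').
Proof. intros H1 H2 x. rewrite !in_app_iff, (H1 x), (H2 x). reflexivity. Qed.

Lemma seteq_map (f : A -> B) (l l' : list A) : seteq l l' -> seteq (map f l) (map f l').
Proof.
  intros H x. rewrite !in_map_iff.
  split; intros [y [Hy Hin]]; exists y; split; auto; apply H; auto.
Qed.

Lemma seteq_map_filter (f : A -> B) (Q : B -> Prop) (l : list A) X X' :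
  (forall x, In x X <-> In x (map f l) /\ Q x) ->
  (forall y, In y X' <-> In y l /\ Q (f y)) ->
  seteq X (map f X').
Proof.
  intros HX HX' x. rewrite HX, !in_map_iff. split.
  - intros [[y [<- Hy]] Hq]. exists y. split; auto. apply HX'. auto.
  - intros [y [<- Hy]]. apply HX' in Hy as [Hy Hq]. split; eauto.
Qed.

End SetEq.

Lemma exists_list_filter {A : Type} (Q : A -> Prop) (l : list A) :
  exists l', forall x, In x l' <-> In x l /\ Q x.
Proof.
  induction l as [|a l [l' Hl']].
  - exists []. simpl. tauto.
  - destruct (classic (Q a)) as [Ha | Ha].
    + exists (a :: l'). intro x. simpl. rewrite Hl'.
      split; [intros [<- | ?]; tauto | tauto].
    + exists l'. intro x. simpl. rewrite Hl'.
      split; [tauto | intros [[<- | ?] ?]; tauto].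
Qed.

Section Instances.
Context {F P : Type} (fw : @caba F P).

Lemma consistent_of_instances (sg : @subst F) (C C0 : list (@atom F P)) :
  (forall c, In c C -> is_constraint fw c) ->
  (forall c, In c C -> In (asubst sg c) C0) ->
  consistent fw C0 -> consistent fw C.
Proof.
  intros HC Hinst [_ HC0]. split; [exact HC|].
  intros M HM. destruct (HC0 M HM) as [v Hv].
  exists (fun x => teval M v (sg x)). intros c Hc. apply aholds_asubst, Hv, Hinst, Hc.
Qed.

Lemma cinst_refl (al : @carg F P) : consistent fw (aC al) -> cinst fw al al.
Proof.
  intros Hcons. exists Var, []. unfold cinst_via.
  rewrite !map_asubst_Var, app_nil_r, asubst_Var.
  refine (conj _ (conj (seteq_refl _) (conj (seteq_refl _) (conj (seteq_refl _)
            (conj eq_refl Hcons))))).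
  intros d [].
Qed.

Lemma cinst_trans (al1 al2 al3 : @carg F P) :
  cinst fw al1 al2 -> cinst fw al2 al3 -> cinst fw al1 al3.
Proof.
  intros [th1 [D1 (HD1 & HC1 & HA1 & HR1 & Hcl1 & Hcons1)]]
         [th2 [D2 (HD2 & HC2 & HA2 & HR2 & Hcl2 & _)]].
  assert (Hcomp : forall l : list (@atom F P),
    map (asubst th1) (map (asubst th2) l) = map (asubst (fun x => tsubst th1 (th2 x))) l).
  { intro l. rewrite map_map. apply map_ext, asubst_asubst. }
  exists (fun x => tsubst th1 (th2 x)), (map (asubst th1) D2 ++ D1).
  refine (conj _ (conj _ (conj _ (conj _ (conj _ Hcons1))))).
  - intros d Hd. apply in_app_iff in Hd as [Hd | Hd]; auto.
    apply in_map_iff in Hd as [d' [<- Hd']]. apply (HD2 _ Hd').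
  - rewrite app_assoc, <- Hcomp, <- map_app.
    apply (seteq_trans _ _ _ HC1), seteq_app, seteq_refl. apply seteq_map, HC2.
  - rewrite <- Hcomp. apply (seteq_trans _ _ _ HA1), seteq_map, HA2.
  - apply (seteq_trans _ _ _ HR1 HR2).
  - rewrite Hcl1, Hcl2. apply asubst_asubst.
Qed.

End Instances.

Section MostGeneral.
Context {F P : Type} (fw : @caba F P).

Lemma tight_cinst_most_general (al : @carg F P) :
  tight fw al -> exists alm, most_general fw alm /\ cinst fw al alm.
Proof.
  intros (Hnc & Hcons & T & Hvalid & Hlabel & Happart & HC & HA & HR).
  set (a := claim al) in *.
  set (bound := list_max (flat_map rule_vars (tcopies T))).
  set (Y := seq (S bound) (length (args_of a))).
  set (sg := mk_subst Y (args_of a)).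
  set (a' := @Atom F P (pred_of a) (map Var Y)).
  assert (HY_fresh : forall c, In c (tcopies T) -> forall x, In x (rule_vars c) -> ~ In x Y).
  { intros c Hc x Hx HxY. apply in_seq in HxY.
    pose proof (proj1 (list_max_le _ _) (le_n bound)) as Hbound.
    rewrite Forall_forall in Hbound.
    assert (x <= bound) by (apply Hbound, in_flat_map; eauto). lia. }
  assert (Ha' : asubst sg a' = a).
  { unfold a', asubst; simpl. rewrite map_map. simpl. unfold sg.
    rewrite map_mk_subst by (apply seq_NoDup || apply length_seq).
    destruct a; reflexivity. }
  destruct (relabel_sound_all fw sg T a' a Hvalid Hlabel Ha')
    as (Hvalid' & Hlabel' & Hcopies & Hrules & Hleaves).
  { intros c Hc x Hx. apply mk_subst_notin. eapply HY_fresh; eauto. }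
  destruct (exists_list_filter (is_constraint fw) (tleaves (relabel a' T))) as [C' HC'].
  destruct (exists_list_filter (is_assumption fw) (tleaves (relabel a' T))) as [A' HA'].
  assert (HCinst : seteq (aC al) (map (asubst sg) C')).
  { apply (seteq_map_filter (asubst sg) (is_constraint fw) (tleaves (relabel a' T))).
    - rewrite Hleaves. exact HC.
    - exact HC'. }
  assert (HAinst : seteq (aA al) (map (asubst sg) A')).
  { apply (seteq_map_filter (asubst sg) (is_assumption fw) (tleaves (relabel a' T))).
    - rewrite Hleaves. exact HA.
    - exact HA'. }
  exists (CArg C' A' (trules T) a'). split; [split|].
  - split; [exact Hnc | split].
    + apply (consistent_of_instances fw sg C' (aC al)); auto.
      * intros c Hc. apply HC', Hc.
      * intros c Hc. apply HCinst, in_map, Hc.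
    + exists (relabel a' T). simpl.
      refine (conj Hvalid' (conj Hlabel' (conj _ (conj HC' (conj HA' _))))).
      * unfold renamed_apart. rewrite Hcopies. split; [apply Happart|].
        intros c Hc x Hx HxY. unfold a' in HxY. rewrite avars_Var_atom in HxY.
        eapply HY_fresh; eauto.
      * rewrite Hrules. apply seteq_refl.
  - exists Y. split; [apply seq_NoDup | reflexivity].
  - exists sg, []. unfold cinst_via. rewrite app_nil_r.
    refine (conj _ (conj HCinst (conj HAinst (conj HR (conj (eq_sym Ha') Hcons))))).
    intros d [].
Qed.

Lemma carg_cinst_mgcarg (al : @carg F P) :
  is_carg fw al -> exists alm, is_mgcarg fw alm /\ cinst fw al alm.
Proof.
  intros [al0 [Htight Hinst]].
  destruct (tight_cinst_most_general al0 Htight) as [alm [Hmg Hinst0]].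
  exists alm. split; [exact Hmg | exact (cinst_trans fw _ _ _ Hinst Hinst0)].
Qed.

Lemma mgcarg_is_carg (al : @carg F P) : is_mgcarg fw al -> is_carg fw al.
Proof.
  intros [Htight _]. exists al. split; [exact Htight|].
  apply cinst_refl, (proj1 (proj2 Htight)).
Qed.

End MostGeneral.

Theorem corollary5p9 (F P : Type) (fw : @caba F P) (al' : @carg F P) :
  GrCInstS fw (is_carg fw) al' <-> GrCInstS fw (is_mgcarg fw) al'.
Proof.
  split.
  - intros [al [Hcarg [Hinst Hground]]].
    destruct (carg_cinst_mgcarg fw al Hcarg) as [alm [Hmg Hinst']].
    exists alm. split; [exact Hmg|].
    split; [exact (cinst_trans fw _ _ _ Hinst Hinst') | exact Hground].
  - intros [al [Hmg Hground]]. exists al.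
    split; [apply mgcarg_is_carg, Hmg | exact Hground].
Qed.
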